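(* Let $d\in\mathbb{N}$ and let $\mathcal{P}$ be a partition of $\mathbb{R}^{d}$. Suppose there exists $D\in(0,\infty)$ such that $D$ is a strict pairwise bound for every $X\in\mathcal{P}$, and suppose there exists $\vec{\alpha}\in\mathbb{R}^{d}$ such that $\vec{\alpha}+[0,D]^{d}$ intersects only finitely many members of $\mathcal{P}$. Then there exists $\vec{p}\in\mathbb{R}^{d}$ such that $|\mathcal{N}_{\overline{0}}(\vec{p})|\geq d+1$. Furthermore, $\mathcal{P}$ contains a $(d+1)$-clique.
   Context: On $\mathbb{R}^d$ use $d_{max}(\vec{x},\vec{y})=\max_i|x_i-y_i|$. $D$ is a strict pairwise bound for a set $X$ if $d_{max}(\vec{x},\vec{y})<D$ for all $\vec{x},\vec{y}\in X$. For $\vec{p}\in\mathbb{R}^d$, $\mathcal{N}_{\overline{0}}(\vec{p})=\{X\in\mathcal{P}:\vec{p}\in\overline{X}\}$ ($\overline{X}$ the closure). Members $X,Y$ are adjacent if $\overline{X}\cap\overline{Y}\ne\emptyset$; an $n$-clique is a set of $n$ distinct pairwise adjacent members. *)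

From HB Require Import structures.
From mathcomp Require Import all_boot all_order all_algebra.
From mathcomp Require Import boolp classical_sets cardinality reals.
Set Implicit Arguments. Unset Strict Implicit. Unset Printing Implicit Defensive.
Import Order.TTheory GRing.Theory Num.Theory.
Local Open Scope ring_scope.
Local Open Scope classical_set_scope.

Definition vec (R : realType) (d : nat) := 'I_d -> R.

(* d_max(x,y) = max_i |x_i - y_i|  (= 0 when d = 0) *)
Definition dmax (R : realType) (d : nat) (x y : vec R d) : R :=
  \big[Num.max/0]_(i < d) `|x i - y i|.

Definition strict_pairwise_bound (R : realType) (d : nat) (D : R) (X : set (vec R d)) :=
  forall x y, X x -> X y -> dmax x y < D.

Definition mclosure (R : realType) (d : nat) (X : set (vec R d)) : set (vec R d) :=
  [set p | forall e : R, 0 < e -> exists2 x, X x & dmax p x < e].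

Definition is_partition (R : realType) (d : nat) (P : set (set (vec R d))) :=
  [/\ (forall X, P X -> X !=set0),
      (forall X Y, P X -> P Y -> X `&` Y !=set0 -> X = Y) &
      (forall x : vec R d, exists2 X, P X & X x)].

Definition cube (R : realType) (d : nat) (alpha : vec R d) (D : R) : set (vec R d) :=
  [set x | forall i, alpha i <= x i <= alpha i + D].

Definition Nbar (R : realType) (d : nat) (P : set (set (vec R d))) (p : vec R d) :=
  [set X | P X /\ mclosure X p].

Definition adjacent (R : realType) (d : nat) (X Y : set (vec R d)) :=
  mclosure X `&` mclosure Y !=set0.

Definition has_clique (R : realType) (d : nat) (P : set (set (vec R d))) (n : nat) :=
  exists f : 'I_n -> set (vec R d),
    [/\ injective f, (forall i, P (f i)) & (forall i j, adjacent (f i) (f j))].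

(* Cut the cube alpha + [0, D]^d into the cells of Kuhn's triangulation of mesh
   D / N, and label a grid point x by the least i such that the member of P
   containing x misses the face x_i = alpha_i (or by d).  A member containing a
   point of the opposite face x_i = alpha_i + D misses the face x_i = alpha_i
   because its diameter is < D, so this is a Sperner labelling, and the
   door-to-door parity argument (pivoting through the facets labelled
   0, ..., d - 1, by induction on d through the top face of the grid) yields a
   fully labelled cell: d + 1 distinct members within D / N of a common point.
   Letting N grow and bisecting the cube produces a point p that has d + 1
   distinct members arbitrarily close to it.  Only finitely many members meet
   the cube, so members close enough to p contain p in their closure; they
   form the required (d + 1)-clique. *)

From HB Require Import structures.
From mathcomp Require Import all_boot all_order all_algebra zify lra ring boolp.
From mathcomp Require classical_sets cardinality reals.

Set Implicit Arguments. Unset Strict Implicit. Unset Printing Implicit Defensive.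
Import Order.TTheory GRing.Theory Num.Theory.

Lemma onto_card_inj_in (T : finType) (A : {pred T}) (g : T -> nat) n :
  #|A| = n -> (forall m, m < n -> exists2 j, j \in A & g j = m) ->
  {in A &, injective g}.
Proof.
move=> cardA onto; apply/dinjectiveP; rewrite /dinjectiveb.
have sub : {subset iota 0 n <= map g (enum A)}.
  move=> m; rewrite mem_iota => /andP[_ mn]; have [j jA <-] := onto m mn.
  by rewrite map_f ?mem_enum.
have size_le : size (map g (enum A)) <= size (iota 0 n).
  by rewrite size_map -cardE cardA size_iota.
have [_ eq_s] := uniq_min_size (iota_uniq 0 n) sub size_le.
by rewrite (uniq_size_uniq (iota_uniq 0 n) eq_s) size_map -cardE cardA size_iota.
Qed.

Section FacetLabels.
Variables (n : nat) (g : 'I_n.+1 -> nat).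
Hypothesis g_le : forall j, g j <= n.

Definition facet_full (k : 'I_n.+1) :=
  [forall m : 'I_n, exists j, (j != k) && (g j == m)].

Definition full_labelling := [forall m : 'I_n.+1, exists j, g j == m].

Lemma facet_fullP k :
  reflect (forall m, m < n -> exists2 j, j != k & g j = m) (facet_full k).
Proof.
apply: (iffP forallP) => [full_k m mn|full_k m].
  by have /existsP[j /andP[jk /eqP gj]] := full_k (Ordinal mn); exists j.
by have [j jk gj] := full_k m (ltn_ord m); apply/existsP; exists j; rewrite jk gj /=.
Qed.

Lemma card_facet_full_of_full :
  full_labelling -> #|[set k | facet_full k]| = 1.
Proof.
move/forallP=> gfull.
have onto m : m < n.+1 -> exists2 j, j \in [set: 'I_n.+1] & g j = m.
  by move=> mn; have /existsP[j /eqP gj] := gfull (Ordinal mn); exists j.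
have g_inj := onto_card_inj_in (etrans (cardsT _) (card_ord _)) onto.
have [k0 _ gk0] := onto n (ltnSn n).
suff -> : [set k | facet_full k] = [set k0] by rewrite cards1.
apply/setP => k; rewrite inE in_set1; apply/facet_fullP/eqP => [Hk|->].
  apply/eqP/negPn/negP => kk0.
  have gkn : g k < n.
    rewrite ltn_neqAle g_le andbT; apply: contra kk0 => /eqP gkn.
    by apply/eqP/g_inj; rewrite ?inE // gkn gk0.
  have [j jk gj] := Hk _ gkn.
  by case/eqP: jk; apply: g_inj; rewrite ?inE.
move=> m mn; have [j _ gj] := onto m (ltnW mn); exists j => //.
by apply: contraTneq mn => jk0; rewrite -gj jk0 gk0 ltnn.
Qed.

Lemma even_card_facet_full :
  ~~ full_labelling -> ~~ odd #|[set k | facet_full k]|.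
Proof.
move=> not_full; set S := [set k | _].
have [->|[k1]] := set_0Vmem S; first by rewrite cards0.
rewrite inE => /facet_fullP k1S.
have g_lt j : g j < n.
  rewrite ltn_neqAle g_le andbT; apply: contra not_full => /eqP gjn.
  apply/forallP => m; apply/existsP.
  have [mn|nm] := ltnP m n; last by exists j; rewrite gjn eqn_leq nm -ltnS ltn_ord.
  by have [j' _ gj'] := k1S m mn; exists j'; rewrite gj'.
have onto m : m < n -> exists2 j, j \in ~: [set k1] & g j = m.
  by move=> mn; have [j jk gj] := k1S m mn; exists j; rewrite ?inE.
have card_k1C : #|~: [set k1]| = n by rewrite cardsC1 card_ord.
have g_inj := onto_card_inj_in card_k1C onto.
have [k2 k2k1 gk2] := k1S _ (g_lt k1).
suff -> : S = [set k1; k2] by rewrite cards2 eq_sym k2k1.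
apply/setP => k; rewrite inE in_set2; apply/idP/idP.
  move=> /facet_fullP kS; apply/negPn/negP; rewrite negb_or => /andP[kk1 kk2].
  have [j jk gj] := kS _ (g_lt k).
  have [jk1|jk1] := eqVneq j k1.
    by case/negP: kk2; apply/eqP/g_inj; rewrite ?inE // gk2 -gj jk1.
  by case/negP: jk; apply/eqP/g_inj; rewrite ?inE.
case/orP=> /eqP ->; apply/facet_fullP => // m mn; have [j jk gj] := k1S m mn.
have [jk2|] := eqVneq j k2; last by exists j.
by exists k1; [rewrite eq_sym | rewrite -gk2 -gj jk2].
Qed.

Lemma odd_card_facet_full : odd #|[set k | facet_full k]| = full_labelling.
Proof.
have [gfull|not_full] := boolP full_labelling.
  by rewrite card_facet_full_of_full.
exact/negbTE/even_card_facet_full.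
Qed.

End FacetLabels.

Lemma even_card_involution (T : finType) (f : T -> T) (A : {set T}) :
  {in A, forall x, [/\ f x \in A, f (f x) = x & f x != x]} -> ~~ odd #|A|.
Proof.
have [n] := ubnP #|A|; elim: n A => // n IH A ltAn fA.
have [->|[a aA]] := set_0Vmem A; first by rewrite cards0.
have [faA ffa fa_neq] := fA a aA.
have cardA : #|A| = (#|A :\: [set a; f a]|).+2.
  rewrite -(cardsID [set a; f a] A) (setIidPr _) ?cards2 1?eq_sym ?fa_neq //.
  by apply/subsetP => y; rewrite !inE => /orP[] /eqP ->.
rewrite cardA /= ?negbK; apply: IH; first by move: ltAn; rewrite cardA; lia.
move=> x; rewrite !inE negb_or => /andP[/andP[xa xfa] xA].
have [fxA ffx fx_neq] := fA x xA; split => //.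
rewrite fxA andbT negb_or; apply/andP; split; apply/eqP => fx_eq.
  by case/eqP: xfa; rewrite -ffx fx_eq.
by case/eqP: xa; rewrite -ffx fx_eq ffa.
Qed.

Lemma odd_sum_congr (I : finType) (F : I -> nat) (b : I -> bool) :
  (forall i, odd (F i) = b i) -> odd (\sum_i F i) = odd (\sum_i b i).
Proof.
move=> oddF; apply: (big_ind2 (fun m n => odd m = odd n)) => //.
  by move=> m1 n1 m2 n2; rewrite !oddD => -> ->.
by move=> i _; rewrite oddF oddb.
Qed.

Section KuhnTriangulation.
Variable N : nat.
Hypothesis N_gt0 : 0 < N.

(* A cell of Kuhn's triangulation of the grid [0, N]^d is a base vertex v in
   [0, N)^d together with a ranking r of the coordinates, stored as an injection
   into 'I_d.+1 with values < d; its j-th vertex (j <= d) is v raised by one in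
   every coordinate of rank < j. *)
Definition cell (d : nat) := ({ffun 'I_d -> 'I_N.+1} * {ffun 'I_d -> 'I_d.+1})%type.
Definition is_cell d (s : cell d) :=
  [&& [forall i, s.1 i < N], [forall i, s.2 i < d] & injectiveb s.2].
Definition vertex d (s : cell d) (k : nat) : 'I_d -> nat :=
  fun i => s.1 i + (s.2 i < k).
Definition door d (c : ('I_d -> nat) -> nat) (s : cell d) :=
  facet_full (fun j : 'I_d.+1 => c (vertex s j)).
Definition rainbow d (c : ('I_d -> nat) -> nat) (s : cell d) :=
  full_labelling (fun j : 'I_d.+1 => c (vertex s j)).
Definition sperner_labelling d (c : ('I_d -> nat) -> nat) :=
  forall w : 'I_d -> nat, (forall i, w i <= N) ->
  [/\ c w <= d, forall i : 'I_d, w i = 0 -> c w != i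
    & forall i : 'I_d, w i = N -> c w <= i].

(* The other cell sharing the facet of s opposite its vertex k, paired with the
   index of its own vertex opposite that facet; the pair is fixed exactly when
   that facet lies on the boundary of the grid. *)
Definition pivot d (x : cell d * 'I_d.+1) : cell d * 'I_d.+1 :=
  let: ((v, r), k) := x in
  if k == 0 :> nat then
    if [forall i, (r i == 0 :> nat) ==> (v i + 1 < N)] then
      (([ffun i => if r i == 0 :> nat then inord (v i + 1) else v i],
        [ffun i => if r i == 0 :> nat then inord d.-1 else inord (r i).-1]), ord_max)
    else x
  else if k == d :> nat then
    if [forall i, (r i == d.-1 :> nat) ==> (0 < v i)] then
      (([ffun i => if r i == d.-1 :> nat then inord (v i).-1 else v i],
        [ffun i => if r i == d.-1 :> nat then ord0 else inord (r i).+1]), ord0)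
    else x
  else ((v, [ffun i => if r i == k.-1 :> nat then k
                       else if r i == k :> nat then inord k.-1 else r i]), k).

Lemma is_cellP d (s : cell d) :
  reflect [/\ forall i, s.1 i < N, forall i, s.2 i < d & injective s.2] (is_cell s).
Proof.
apply: (iffP and3P) => [[/forallP v_lt /forallP r_lt /injectiveP r_inj]|[v_lt r_lt r_inj]].
  by [].
by split; [apply/forallP | apply/forallP | apply/injectiveP].
Qed.

Lemma cell_rank_onto d (s : cell d) :
  is_cell s -> forall m, m < d -> exists i, s.2 i = m :> nat.
Proof.
case/is_cellP => _ r_lt r_inj m md.
have sub : s.2 @: [set: 'I_d] \subset [set~ ord_max].
  by apply/subsetP => _ /imsetP[i _ ->]; rewrite !inE -val_eqE /= neq_ltn r_lt.
have := subset_cardP _ sub.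
rewrite cardsC1 !card_ord card_imset // cardsT card_ord => /(_ erefl) im_r.
have : Ordinal (leqW md) \in s.2 @: [set: 'I_d].
  by rewrite im_r !inE -val_eqE /= neq_ltn md.
by case/imsetP => i _ /(congr1 val) /= ->; exists i.
Qed.

Ltac inordK_simpl :=
  repeat match goal with
  | |- context [nat_of_ord (@inord ?n ?m)] =>
      let E := fresh "E" in
      (have E : nat_of_ord (@inord n m) = m by rewrite inordK //; lia);
      rewrite E; clear E
  | H : context [nat_of_ord (@inord ?n ?m)] |- _ =>
      let E := fresh "E" in
      (have E : nat_of_ord (@inord n m) = m by rewrite inordK //; lia);
      rewrite E in H; clear E
  end.

Ltac cell_arith :=
  repeat (rewrite ?ffunE /=; inordK_simpl;
    match goal with |- context [if ?b then _ else _] =>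
      lazymatch b with context [if _ then _ else _] => fail | _ => idtac end;
      case: (boolP b) => /= end);
  rewrite ?ffunE /=; intros; inordK_simpl; lia.

Lemma pivot_is_cell d (x : cell d * 'I_d.+1) : 0 < d -> is_cell x.1 -> is_cell (pivot x).1.
Proof.
move=> d0; case: x => [[v r] k] /= /[dup] s_cell /is_cellP[/= v_lt r_lt r_inj].
have k_le := ltn_ord k.
have rank_inj (r' : {ffun 'I_d -> 'I_d.+1}) :
    (forall a b, r' a = r' b :> nat -> r a = r b :> nat) -> injective r'.
  by move=> eq_r a b /(congr1 val) /eq_r ab; apply/r_inj/val_inj.
case: (k =P 0 :> nat) => k0.
  rewrite /pivot /= ?k0 ?eqxx; case: ifP => [/forallP up|//] /=; apply/is_cellP; split.
  - by move=> i /=; move: (v_lt i) (r_lt i) (up i) => vi ri ui; cell_arith.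
  - by move=> i /=; have ri := r_lt i; cell_arith.
  - by apply: rank_inj => a b /=; move: (r_lt a) (r_lt b) => ra rb; cell_arith.
have k0' : (k == 0 :> nat) = false by apply/eqP.
case: (k =P d :> nat) => kd.
  rewrite /pivot /= ?k0' ?kd ?eqxx; case: ifP => [/forallP down|//] /=; apply/is_cellP; split.
  - by move=> i /=; move: (v_lt i) (r_lt i) (down i) => vi ri di; cell_arith.
  - by move=> i /=; have ri := r_lt i; cell_arith.
  - by apply: rank_inj => a b /=; move: (r_lt a) (r_lt b) => ra rb; cell_arith.
have kd' : (k == d :> nat) = false by apply/eqP.
rewrite /pivot /= ?k0' ?kd'; apply/is_cellP; split => //.
- by move=> i /=; have ri := r_lt i; cell_arith.
- by apply: rank_inj => a b /=; move: (r_lt a) (r_lt b) => ra rb; cell_arith.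
Qed.

Lemma pivotK d (x : cell d * 'I_d.+1) : 0 < d -> is_cell x.1 -> pivot (pivot x) = x.
Proof.
move=> d0; case: x => [[v r] k] /is_cellP[/= v_lt r_lt _].
have k_le := ltn_ord k.
case: (k =P 0 :> nat) => k0.
  case: ifP => [/forallP up|stay]; last first.
    by rewrite /pivot /= k0 eqxx stay.
  rewrite /= ifF; last by apply/negbTE; lia.
  rewrite eqxx ifT; last first.
    by apply/forallP => i; move: (v_lt i) (r_lt i) (up i) => vi ri ui; cell_arith.
  congr (_, _, _); last exact/val_inj.
    by apply/ffunP => i; apply/val_inj; move: (v_lt i) (r_lt i) => vi ri; cell_arith.
  by apply/ffunP => i; apply/val_inj; have ri := r_lt i; cell_arith.
have k0' : (k == 0 :> nat) = false by apply/eqP.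
case: (k =P d :> nat) => kd.
  case: ifP => [/forallP down|stay]; last first.
    by rewrite /pivot /= ?k0' kd eqxx stay.
  rewrite /= ifT; last first.
    by apply/forallP => i; move: (v_lt i) (r_lt i) (down i) => vi ri di; cell_arith.
  congr (_, _, _); last exact/val_inj.
    by apply/ffunP => i; apply/val_inj; move: (v_lt i) (r_lt i) (down i) => vi ri di; cell_arith.
  by apply/ffunP => i; apply/val_inj; have ri := r_lt i; cell_arith.
have kd' : (k == d :> nat) = false by apply/eqP.
rewrite /pivot /= !(k0', kd') /=; congr (_, _, _).
by apply/ffunP => i; apply/val_inj; have ri := r_lt i; cell_arith.
Qed.

Lemma pivot_facet d (x : cell d * 'I_d.+1) j : 0 < d -> is_cell x.1 -> j != x.2 ->
  exists2 j', j' != (pivot x).2 & vertex (pivot x).1 j' = vertex x.1 j.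
Proof.
move=> d0; case: x => [[v r] k] /is_cellP[/= v_lt r_lt _] /= jk.
have jk' : j <> k :> nat by move/val_inj => jk_eq; rewrite jk_eq eqxx in jk.
move: (ltn_ord j) (ltn_ord k) => j_le k_le; rewrite /pivot.
case: (k =P 0 :> nat) => k0.
  case: ifP => /forallP up /=; last by exists j.
  exists (inord j.-1); first by rewrite -val_eqE /=; cell_arith.
  by apply: funext => i; rewrite /vertex; move: (v_lt i) (r_lt i) (up i) => vi ri ui; cell_arith.
case: (k =P d :> nat) => kd.
  case: ifP => /forallP down /=; last by exists j.
  exists (inord j.+1); first by rewrite -val_eqE /=; cell_arith.
  by apply: funext => i; rewrite /vertex; move: (v_lt i) (r_lt i) (down i) => vi ri di; cell_arith.
by exists j => //=; apply: funext => i; rewrite /vertex; move: (r_lt i) => ri; cell_arith.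
Qed.

Lemma pivot_door d c (x : cell d * 'I_d.+1) : 0 < d -> is_cell x.1 ->
  door c x.1 x.2 -> door c (pivot x).1 (pivot x).2.
Proof.
move=> d0 x_cell /facet_fullP x_door; apply/facet_fullP => m mm.
have [j jk cj] := x_door m mm; have [j' j'k vertex_j'] := pivot_facet d0 x_cell jk.
by exists j'; rewrite // vertex_j'.
Qed.

Lemma vertex_le d (s : cell d) : is_cell s -> forall j i, vertex s j i <= N.
Proof.
by case/is_cellP => v_lt _ _ j i; rewrite /vertex; move: (v_lt i); case: (s.2 i < j) => /=; lia.
Qed.

Lemma even_card_moved_doors d c : 0 < d ->
  ~~ odd #|[set x : cell d * 'I_d.+1 | is_cell x.1 && door c x.1 x.2 && (pivot x != x)]|.
Proof.
move=> d0; apply: (@even_card_involution _ (@pivot d)) => x.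
rewrite !inE => /andP[/andP[x_cell x_door] x_moved].
by rewrite pivot_is_cell // pivot_door // pivotK // eq_sym x_moved.
Qed.

Lemma odd_card_doors d c : sperner_labelling c ->
  odd #|[set x : cell d * 'I_d.+1 | is_cell x.1 && door c x.1 x.2]| =
  odd #|[set s : cell d | is_cell s && rainbow c s]|.
Proof.
move=> c_sperner.
have -> : #|[set x : cell d * 'I_d.+1 | is_cell x.1 && door c x.1 x.2]| =
    \sum_(s : cell d) \sum_(k : 'I_d.+1) (is_cell s && door c s k).
  rewrite pair_big /= -sum1_card big_mkcond /=.
  by apply: eq_bigr => x _; rewrite inE; case: (_ && _).
have -> : #|[set s : cell d | is_cell s && rainbow c s]| =
    \sum_(s : cell d) (is_cell s && rainbow c s).
  by rewrite -sum1_card big_mkcond /=; apply: eq_bigr => s _; rewrite inE.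
apply: odd_sum_congr => s; have [s_cell|_] /= := boolP (is_cell s); last first.
  by rewrite big1.
rewrite /rainbow -odd_card_facet_full; last first.
  by move=> j; have [] := c_sperner _ (vertex_le s_cell j).
rewrite -sum1_card [in RHS]big_mkcond /=.
by congr odd; apply: eq_bigr => k _; rewrite inE.
Qed.

Definition onto_top_face d (w : 'I_d -> nat) : 'I_d.+1 -> nat :=
  fun i => if unlift ord_max i is Some j then w j else N.

Definition top_face_labelling d (c : ('I_d.+1 -> nat) -> nat) (w : 'I_d -> nat) :=
  c (onto_top_face w).

(* The vertices 1, ..., d + 1 of such a cell lie on the face x_max = N. *)
Definition top_cell d (s : cell d.+1) :=
  (s.2 ord_max == 0 :> nat) && (s.1 ord_max == N.-1 :> nat).

Definition top_facet d (s : cell d.+1) : cell d :=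
  ([ffun i => s.1 (lift ord_max i)], [ffun i => inord (s.2 (lift ord_max i)).-1]).

Definition cell_of_top_facet d (s : cell d) : cell d.+1 :=
  ([ffun i => if unlift ord_max i is Some j then s.1 j else inord N.-1],
   [ffun i => if unlift ord_max i is Some j then inord (s.2 j).+1 else ord0]).

Lemma sperner_top_face_labelling d c :
  sperner_labelling c -> sperner_labelling (@top_face_labelling d c).
Proof.
move=> c_sperner w w_le.
have top_le i : onto_top_face w i <= N by rewrite /onto_top_face; case: unliftP.
have [c_le c_0 c_N] := c_sperner _ top_le; rewrite /top_face_labelling; split.
- by have := c_N ord_max; rewrite /onto_top_face unlift_none; apply.
- by move=> i wi0; have := c_0 (lift ord_max i); rewrite /onto_top_face liftK lift_max; apply.
- by move=> i wiN; have := c_N (lift ord_max i); rewrite /onto_top_face liftK lift_max; apply.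
Qed.

Lemma top_facet_rank_gt0 d (s : cell d.+1) j :
  is_cell s -> s.2 ord_max = 0 :> nat -> 0 < s.2 (lift ord_max j).
Proof.
case/is_cellP => _ _ r_inj r_max; rewrite lt0n; apply: contraNneq (neq_lift ord_max j).
by move=> r_j; rewrite eq_sym; apply/eqP/r_inj/val_inj; rewrite /= r_j r_max.
Qed.

Lemma vertex_top_facet d (s : cell d.+1) j : is_cell s -> top_cell s ->
  onto_top_face (vertex (top_facet s) j) = vertex s j.+1.
Proof.
move=> s_cell /andP[/eqP r_max /eqP v_max]; have := top_facet_rank_gt0 _ s_cell r_max.
case/is_cellP: s_cell => _ r_lt _ r_gt0; apply: funext => i; rewrite /onto_top_face /vertex.
case: (unliftP ord_max i) => [i' ->|->]; last by rewrite r_max v_max; lia.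
by move: (r_gt0 i') (r_lt (lift ord_max i')) => ri ri'; cell_arith.
Qed.

Lemma top_facet_is_cell d (s : cell d.+1) :
  is_cell s -> s.2 ord_max = 0 :> nat -> is_cell (top_facet s).
Proof.
move=> s_cell r_max; have r_gt0 j := top_facet_rank_gt0 j s_cell r_max.
case/is_cellP: s_cell => v_lt r_lt r_inj; apply/is_cellP; split => [i|i|a b] /=.
- by rewrite ffunE.
- by move: (r_gt0 i) (r_lt (lift ord_max i)) => ri ri'; cell_arith.
move=> /(congr1 val) eq_ab; apply: (@lift_inj _ ord_max); apply/r_inj/val_inj.
move: eq_ab (r_gt0 a) (r_gt0 b) (r_lt (lift ord_max a)) (r_lt (lift ord_max b)).
by cell_arith.
Qed.

Lemma cell_of_top_facet_is_cell d (s : cell d) : is_cell s -> is_cell (cell_of_top_facet s).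
Proof.
case/is_cellP => v_lt r_lt r_inj; apply/is_cellP; split => [i|i|a b] /=; rewrite ?ffunE.
- by case: unliftP => [j _|_] //; cell_arith.
- by case: unliftP => [j _|_] //; move: (r_lt j) => rj; cell_arith.
case: (unliftP ord_max a) => [a' ->|->]; case: (unliftP ord_max b) => [b' ->|->] //.
- move=> /(congr1 val) eq_ab; congr lift; apply/r_inj/val_inj.
  by move: eq_ab (r_lt a') (r_lt b'); cell_arith.
- by move=> /(congr1 val); move: (r_lt a') => ra; cell_arith.
- by move=> /(congr1 val); move: (r_lt b') => rb; cell_arith.
Qed.

Lemma top_cell_of_top_facet d (s : cell d) : top_cell (cell_of_top_facet s).
Proof. by rewrite /top_cell !ffunE unlift_none; cell_arith. Qed.

Lemma cell_of_top_facetK d (s : cell d) :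
  is_cell s -> top_facet (cell_of_top_facet s) = s.
Proof.
case: s => v r /is_cellP[_ r_lt _]; congr (_, _); apply/ffunP => i; rewrite !ffunE liftK //.
by apply: val_inj; move: (r_lt i) => /= ri; cell_arith.
Qed.

Lemma top_facetK d (s : cell d.+1) :
  is_cell s -> top_cell s -> cell_of_top_facet (top_facet s) = s.
Proof.
move=> s_cell /andP[/eqP r_max /eqP v_max].
have r_gt0 j := top_facet_rank_gt0 j s_cell r_max.
case/is_cellP: s_cell => _ r_lt _; case: s r_max v_max r_gt0 r_lt => v r /= r_max v_max r_gt0 r_lt.
congr (_, _); apply/ffunP => i; rewrite !ffunE; apply: val_inj.
  by case: (unliftP ord_max i) => [j ->|->]; rewrite ?ffunE //= v_max; cell_arith.
case: (unliftP ord_max i) => [j ->|->]; rewrite ?ffunE //= ?r_max //.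
by move: (r_gt0 j) (r_lt (lift ord_max j)) => rj rj'; cell_arith.
Qed.

(* A door fixed by pivot lies on the boundary of the grid.  It cannot lie on a
   face x_i = 0, which carries no label i, and on a face x_i = N it carries only
   labels <= i, so there i is the last coordinate since the door has label d. *)
Lemma pivot_fixed_door d c (s : cell d.+1) k : sperner_labelling c -> is_cell s ->
  door c s k -> pivot (s, k) = (s, k) -> k = ord0 /\ top_cell s.
Proof.
move=> c_sperner s_cell /facet_fullP s_door; have c_le j := c_sperner _ (vertex_le s_cell j).
move: (ltn_ord k); case: s s_cell s_door c_le => v r s_cell s_door c_le k_le.
have /is_cellP[/= v_lt r_lt _] := s_cell; rewrite /pivot /top_cell.
case: (k =P 0 :> nat) => k0.
  case: ifP => [_ [] _ _ /(congr1 val) /=|]; first by lia.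
  move/negbT/forallPn => [i]; rewrite negb_imply => /andP[/eqP ri0 vi] _.
  have [j jk cj] := s_door d (ltnSn d).
  have j0 : j != 0 :> nat by rewrite -k0 val_eqE.
  have [_ _ c_N] := c_le j; have /c_N : vertex (v, r) j i = N.
    by rewrite /vertex /= ri0; move: (v_lt i) => vi'; cell_arith.
  rewrite cj => i_max; have i_eq : i = ord_max by apply: val_inj => /=; move: (ltn_ord i); lia.
  split; first exact: val_inj.
  by rewrite -i_eq ri0 eqxx; move: (v_lt i) => vi'; cell_arith.
case: (k =P d.+1 :> nat) => kd.
  case: ifP => [_ [] _ _ /(congr1 val) /=|]; first by lia.
  move/negbT/forallPn => [i]; rewrite negb_imply => /andP[/eqP ri0 vi] _.
  have [j jk cj] := s_door i (ltn_ord i).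
  have jd : j != d.+1 :> nat.
    by apply: contraNneq jk => j_eq; apply/eqP/val_inj; rewrite /= j_eq kd.
  have [_ c_0 _] := c_le j; have /c_0 : vertex (v, r) j i = 0.
    by rewrite /vertex /= ri0; move: (ltn_ord j) => j_le; cell_arith.
  by rewrite cj eqxx.
case=> /ffunP/(_ _)/(congr1 val) r_fixed.
have [i ri] : exists i, r i = k :> nat by apply: (cell_rank_onto s_cell); lia.
by move: (r_fixed i); rewrite ffunE ri; cell_arith.
Qed.
Lemma pivot_top_door d (s : cell d.+1) : top_cell s -> pivot (s, ord0) = (s, ord0).
Proof.
case: s => v r /andP[/eqP r_max /eqP v_max]; rewrite /pivot /= ifF //.
by apply/negbTE/forallPn; exists ord_max; rewrite r_max v_max /=; lia.
Qed.

Definition top_doors d c := [set s : cell d.+1 | [&& is_cell s, top_cell s & door c s ord0]].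

Lemma fixed_doorsE d c : sperner_labelling c ->
  [set x : cell d.+1 * 'I_d.+2 | is_cell x.1 && door c x.1 x.2 && (pivot x == x)] =
  [set (s, ord0) | s in top_doors c].
Proof.
move=> c_sperner; apply/setP => -[s k]; rewrite inE /=; apply/idP/imsetP.
  case/andP=> /andP[s_cell s_door] /eqP s_fixed.
  have [k0 s_top] := pivot_fixed_door c_sperner s_cell s_door s_fixed; subst k.
  by exists s => //; rewrite inE s_cell s_top.
case=> t /[swap] -[-> ->]; rewrite inE => /and3P[t_cell t_top t_door].
by rewrite t_cell t_door /=; apply/eqP/pivot_top_door.
Qed.

Lemma rainbow_top_facetsE d c :
  [set s : cell d | is_cell s && rainbow (top_face_labelling c) s] =
  @top_facet d @: top_doors c.
Proof.
apply/setP => s; rewrite inE; apply/idP/imsetP.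
  case/andP => s_cell /forallP s_rainbow; exists (cell_of_top_facet s).
    rewrite inE cell_of_top_facet_is_cell // top_cell_of_top_facet; apply/forallP => m.
    have /existsP[j /eqP cj] := s_rainbow m; apply/existsP; exists (lift ord0 j).
    rewrite eq_sym neq_lift lift0 -vertex_top_facet ?cell_of_top_facetK //.
    - exact/eqP.
    - exact: cell_of_top_facet_is_cell.
    - exact: top_cell_of_top_facet.
  by rewrite cell_of_top_facetK.
case=> t; rewrite inE => /and3P[t_cell t_top /forallP t_door] ->.
rewrite top_facet_is_cell //=; last by case/andP: t_top => /eqP.
apply/forallP => m; have /existsP[j /andP[jk /eqP cj]] := t_door m.
case: (unliftP ord0 j) jk cj => [j' ->|->]; last by rewrite eqxx.
move=> _ cj; apply/existsP; exists j'.
by rewrite /top_face_labelling vertex_top_facet // -cj lift0.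
Qed.

Lemma card_fixed_doors d c : sperner_labelling c ->
  #|[set x : cell d.+1 * 'I_d.+2 | is_cell x.1 && door c x.1 x.2 && (pivot x == x)]| =
  #|[set s : cell d | is_cell s && rainbow (top_face_labelling c) s]|.
Proof.
move=> c_sperner; rewrite fixed_doorsE // rainbow_top_facetsE card_imset; last first.
  by move=> s t [].
rewrite card_in_imset // => s t; rewrite !inE => /and3P[s_cell s_top _] /and3P[t_cell t_top _].
by move=> eq_st; rewrite -(top_facetK s_cell s_top) -(top_facetK t_cell t_top) eq_st.
Qed.

Theorem odd_card_rainbow d (c : ('I_d -> nat) -> nat) : sperner_labelling c ->
  odd #|[set s : cell d | is_cell s && rainbow c s]|.
Proof.
elim: d c => [|d IH] c c_sperner.
  have -> : [set s : cell 0 | is_cell s && rainbow c s] = setT.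
    apply/setP => s; rewrite !inE; apply/andP; split; first by apply/is_cellP; split; case.
    apply/forallP => m; apply/existsP; exists ord0.
    have no_coord : forall i : 'I_0, vertex s 0 i <= N by case.
    have [c_le _ _] := c_sperner _ no_coord.
    by move: c_le m; rewrite leqn0 => /eqP -> [[]].
  by rewrite cardsT card_prod !card_ffun !card_ord.
rewrite -odd_card_doors // -(cardsID [set x | pivot x != x]) oddD.
rewrite (_ : _ :&: _ = [set x | is_cell x.1 && door c x.1 x.2 && (pivot x != x)]); last first.
  by apply/setP => x; rewrite !inE.
rewrite (negbTE (even_card_moved_doors _ _)) // (_ : _ :\: _ =
  [set x | is_cell x.1 && door c x.1 x.2 && (pivot x == x)]); last first.
  by apply/setP => x; rewrite !inE negbK andbC.
by rewrite card_fixed_doors //; apply/IH/sperner_top_face_labelling.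
Qed.

End KuhnTriangulation.

Import classical_sets cardinality reals.
Local Open Scope ring_scope.
Local Open Scope classical_set_scope.

Lemma pos_lower_bound_seq (R : realDomainType) (T : eqType) (s : seq T) (F : T -> R) :
  (forall t, t \in s -> 0 < F t) ->
  exists2 e : R, 0 < e & forall t, t \in s -> e <= F t.
Proof.
elim: s => [|a s IH] F_gt0; first by exists 1.
have [e e_gt0 e_le] : exists2 e : R, 0 < e & forall t, t \in s -> e <= F t.
  by apply: IH => t ts; apply: F_gt0; rewrite inE ts orbT.
have Fa_gt0 : 0 < F a by apply: F_gt0; rewrite inE eqxx.
exists (Num.min (F a) e); first by rewrite lt_min Fa_gt0 e_gt0.
move=> t; rewrite inE => /orP[/eqP ->|ts]; first by rewrite ge_min lexx.
by rewrite ge_min e_le ?orbT.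
Qed.

Lemma nested_intervals_meet (R : realType) (a h : nat -> R) :
  (forall n, 0 <= h n) ->
  (forall n, a n <= a n.+1 /\ a n.+1 + h n.+1 <= a n + h n) ->
  exists x, forall n, a n <= x <= a n + h n.
Proof.
move=> h_ge0 nested.
have nested_le n k : a n <= a (n + k)%N /\ a (n + k)%N + h (n + k)%N <= a n + h n.
  elim: k => [|k [IH1 IH2]]; first by rewrite addn0.
  rewrite addnS; have [le1 le2] := nested (n + k)%N.
  by split; [apply: le_trans le1 | apply: le_trans IH2].
have a_ub n m : a m <= a n + h n.
  have [nm|mn] := leqP n m.
    have [_] := nested_le n (m - n)%N; rewrite subnKC // => le_nm.
    by apply: le_trans le_nm; rewrite lerDl.
  have [+ _] := nested_le m (n - m)%N; rewrite subnKC 1?ltnW // => le_mn.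
  by apply: le_trans le_mn _; rewrite lerDl.
have a_sup : has_sup (range a).
  by split; [exists (a 0%N), 0%N | exists (a 0%N + h 0%N) => _ [m _ <-]; exact: a_ub].
exists (sup (range a)) => n; apply/andP; split.
  by apply: sup_upper_bound a_sup _ _; exists n.
by apply: ge_sup; [exists (a 0%N), 0%N | move=> _ [m _ <-]; exact: a_ub].
Qed.

Section MaxDistance.
Variables (R : realType) (d : nat).
Implicit Types x y z : vec R d.

Lemma coord_le_dmax x y i : `|x i - y i| <= dmax x y.
Proof. by rewrite /dmax (bigD1 i) //= le_max lexx. Qed.

Lemma dmax_ge0 x y : 0 <= dmax x y.
Proof. by apply: (big_ind (fun t => 0 <= t)) => // a b a_ge0 b_ge0; rewrite le_max a_ge0. Qed.

Lemma dmax_lt x y (e : R) : 0 < e -> (forall i, `|x i - y i| < e) -> dmax x y < e.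
Proof.
by move=> e_gt0 lt_e; apply: (big_ind (fun t => t < e)) => // a b; rewrite gt_max => ->.
Qed.

Lemma dmax_le x y (e : R) : 0 <= e -> (forall i, `|x i - y i| <= e) -> dmax x y <= e.
Proof.
by move=> e_ge0 le_e; apply: (big_ind (fun t => t <= e)) => // a b; rewrite ge_max => ->.
Qed.

Lemma dmax_triangle x y z : dmax x z <= dmax x y + dmax y z.
Proof.
apply: dmax_le => [|i]; first by rewrite addr_ge0 // dmax_ge0.
by apply: le_trans (ler_distD (y i) (x i) (z i)) _; rewrite lerD // coord_le_dmax.
Qed.

End MaxDistance.

Section Bisection.
Variables (R : realType) (d : nat) (Phi : vec R d -> R -> Prop).
Hypothesis Phi_mono : forall q e e', Phi q e -> e <= e' -> Phi q e'.

Definition cube_witnesses (a : vec R d) (s : R) :=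
  forall e, 0 < e -> exists q, cube a s q /\ Phi q e.

Definition half_corner (a : vec R d) (s : R) (b : {ffun 'I_d -> bool}) : vec R d :=
  fun i => a i + s / 2 * (b i)%:R.

Lemma cube_witnesses_half a s :
  0 < s -> cube_witnesses a s -> exists b, cube_witnesses (half_corner a s b) (s / 2).
Proof.
move=> s_gt0 wit; apply: contrapT => /forallNP no_half.
have /choice[E E_spec] : forall b, exists e : R,
    0 < e /\ forall q, cube (half_corner a s b) (s / 2) q -> ~ Phi q e.
  move=> b; have /existsNP[e /not_implyP[e_gt0 /forallNP no_q]] := no_half b.
  by exists e; split => // q q_cube Pq; apply: (no_q q).
have [e e_gt0 e_le] := @pos_lower_bound_seq _ _ (enum {ffun 'I_d -> bool}) E
  (fun b _ => (E_spec b).1).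
have [q [q_cube Pq]] := wit e e_gt0.
pose b := [ffun i => a i + s / 2 <= q i].
have : cube (half_corner a s b) (s / 2) q.
  move=> i; rewrite /half_corner ffunE; have /andP[q_ge q_le] := q_cube i.
  case: (lerP (a i + s / 2) (q i)) => [le_q|lt_q] /=; rewrite ?mulr1 ?mulr0 ?addr0.
    by rewrite le_q (le_trans q_le) // -addrA -splitr.
  by rewrite q_ge ltW.
by move/(E_spec b).2; apply; apply: Phi_mono Pq _; apply: e_le; rewrite mem_enum.
Qed.

Lemma nested_witness_cubes a s : 0 < s -> cube_witnesses a s ->
  exists c : nat -> vec R d, forall n, cube_witnesses (c n) (s / 2 ^+ n) /\
    forall i, c n i <= c n.+1 i /\ c n.+1 i + s / 2 ^+ n.+1 <= c n i + s / 2 ^+ n.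
Proof.
move=> s_gt0 wit_a.
have h_gt0 n : 0 < s / 2 ^+ n by rewrite divr_gt0 // exprn_gt0.
have hS n : s / 2 ^+ n.+1 = s / 2 ^+ n / 2 by rewrite exprSr invfM mulrA.
have /choice[b b_spec] : forall an : vec R d * nat, exists b,
    cube_witnesses an.1 (s / 2 ^+ an.2) ->
    cube_witnesses (half_corner an.1 (s / 2 ^+ an.2) b) (s / 2 ^+ an.2.+1).
  move=> [a' n] /=; have [wit|no_wit] := pselect (cube_witnesses a' (s / 2 ^+ n)).
    by have [b wit_b] := cube_witnesses_half (h_gt0 n) wit; exists b; rewrite hS.
  by exists [ffun=> false] => /no_wit.
pose c := fix c n :=
  if n is n'.+1 then half_corner (c n') (s / 2 ^+ n') (b (c n', n')) else a.
exists c => n; split.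
  by elim: n => [|n IH]; [rewrite expr0 divr1 | apply: (b_spec (c n, n))].
move=> i; rewrite /= /half_corner hS; move: (h_gt0 n) => hn_gt0.
case: (b _ i) => /=; rewrite ?mulr1 ?mulr0 ?addr0; split => //.
- by rewrite lerDl divr_ge0 // ltW.
- by rewrite -addrA -splitr.
- by rewrite lerD2l ler_pdivrMr // ler_pMr // ler1n.
Qed.

Lemma witnesses_cluster a s : 0 < s -> cube_witnesses a s ->
  exists p, forall e, 0 < e -> exists q, dmax p q < e /\ Phi q e.
Proof.
move=> s_gt0 wit_a; have [c c_spec] := nested_witness_cubes s_gt0 wit_a.
have h_ge0 n : 0 <= s / 2 ^+ n by rewrite divr_ge0 ?exprn_ge0 // ltW.
have /choice[p p_in] : forall i, exists x, forall n, c n i <= x <= c n i + s / 2 ^+ n.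
  by move=> i; apply: nested_intervals_meet => // n; apply: (c_spec n).2.
exists p => e e_gt0.
have [n h_lt] : exists n, s / 2 ^+ n < e.
  pose k := Num.Def.archi_bound (s / e).
  have k_gt : s / e < k%:R by apply: archi_boundP; rewrite divr_ge0 // ltW.
  exists k; rewrite ltr_pdivrMr ?exprn_gt0 // mulrC -ltr_pdivrMr //.
  by apply: lt_trans k_gt _; rewrite -natrX ltr_nat ltn_expl.
have [q [q_cube Pq]] := (c_spec n).1 e e_gt0.
exists q; split => //; apply: dmax_lt => // i.
have /andP[p_ge p_le] := p_in i n; have /andP[q_ge q_le] := q_cube i.
rewrite ltr_norml; apply/andP; split; lra.
Qed.

End Bisection.

Section SpernerLabelling.
Variables (R : realType) (d : nat) (P : set (set (vec R d))) (D : R) (alpha : vec R d).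
Hypotheses (P_cover : forall x, exists2 X, P X & X x) (D_gt0 : 0 < D)
  (P_bound : forall X, P X -> strict_pairwise_bound D X).

Definition member (x : vec R d) : set (vec R d) := s2val (cid2 (P_cover x)).

Lemma member_in x : P (member x). Proof. exact: s2valP (cid2 (P_cover x)). Qed.

Lemma mem_member x : member x x. Proof. exact: s2valP' (cid2 (P_cover x)). Qed.

Definition meets_face (X : set (vec R d)) (i : 'I_d) := exists2 y, X y & y i = alpha i.

Definition face_label (X : set (vec R d)) : nat :=
  find (fun i => ~~ `[< meets_face X i >]) (enum 'I_d).

Lemma face_label_le X : (face_label X <= d)%N.
Proof. by rewrite -[X in (_ <= X)%N]size_enum_ord find_size. Qed.

Lemma face_label_met X i : meets_face X i -> face_label X != i.
Proof.
move=> X_meets; apply/eqP => label_i.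
have missed : has (fun i => ~~ `[< meets_face X i >]) (enum 'I_d).
  by rewrite has_find size_enum_ord -/(face_label X) label_i.
by have := nth_find i missed; rewrite -/(face_label X) label_i nth_ord_enum => /asboolPn.
Qed.

Lemma face_label_missed X i : ~ meets_face X i -> (face_label X <= i)%N.
Proof.
move=> X_misses; rewrite leqNgt; apply/negP => /(before_find i).
by rewrite nth_ord_enum => /negbFE /asboolP.
Qed.

Definition grid_point (N : nat) (w : 'I_d -> nat) : vec R d :=
  fun i => alpha i + D * (w i)%:R / N%:R.

Definition grid_labelling N (w : 'I_d -> nat) : nat := face_label (member (grid_point N w)).

Lemma grid_point_cube N w :
  (0 < N)%N -> (forall i, (w i <= N)%N) -> cube alpha D (grid_point N w).
Proof.
move=> N_gt0 w_le i; apply/andP; split; first by rewrite lerDl divr_ge0 ?mulr_ge0 // ltW.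
by rewrite lerD2l ler_pdivrMr ?ltr0n // ler_pM2l // ler_nat.
Qed.

Lemma sperner_grid_labelling N : (0 < N)%N -> sperner_labelling N (grid_labelling N).
Proof.
move=> N_gt0 w w_le; split; first exact: face_label_le.
  move=> i wi0; apply: face_label_met; exists (grid_point N w); first exact: mem_member.
  by rewrite /grid_point wi0 mulr0 mul0r addr0.
move=> i wiN; apply: face_label_missed => -[y member_y yi].
have := P_bound (member_in (grid_point N w)) (mem_member (grid_point N w)) member_y.
apply/negP; rewrite -leNgt; apply: le_trans (coord_le_dmax _ _ i).
rewrite /grid_point wiN yi mulfK ?pnatr_eq0 -?lt0n // addrC addKr.
by rewrite ger0_norm // ltW.
Qed.

Definition near_members (q : vec R d) (e : R) :=
  exists f : 'I_d.+1 -> set (vec R d), injective f /\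
    forall m, P (f m) /\ exists x, [/\ f m x, cube alpha D x & dmax q x < e].

Lemma near_members_mono q e e' : near_members q e -> e <= e' -> near_members q e'.
Proof.
move=> [f [f_inj near_f]] le_e; exists f; split => // m.
have [Pfm [x [fx x_cube qx]]] := near_f m; split => //; exists x; split => //.
exact: lt_le_trans le_e.
Qed.

Lemma near_members_rainbow N (s : cell N d) e : (0 < N)%N -> D / N%:R < e ->
  is_cell s -> rainbow (grid_labelling N) s ->
  near_members (grid_point N (fun i => s.1 i)) e.
Proof.
move=> N_gt0 DN_lt s_cell /forallP s_rainbow.
have /choice[J J_label] : forall m : 'I_d.+1, exists j, grid_labelling N (vertex s j) = m.
  by move=> m; have /existsP[j /eqP label_j] := s_rainbow m; exists j.
exists (fun m => member (grid_point N (vertex s (J m)))); split.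
  by move=> m m' eq_m; apply: ord_inj; rewrite -J_label -[RHS]J_label /grid_labelling eq_m.
move=> m; split; first exact: member_in.
exists (grid_point N (vertex s (J m))); split; first exact: mem_member.
  exact/grid_point_cube/vertex_le.
have DN_ge0 : 0 <= D / N%:R by rewrite divr_ge0 // ltW.
apply: dmax_lt => [|i]; first exact: le_lt_trans DN_lt.
apply: le_lt_trans DN_lt.
rewrite /grid_point /vertex natrD; case: (s.2 i < J m)%N; last first.
  by rewrite addr0 subrr normr0.
have -> : alpha i + D * (s.1 i)%:R / N%:R - (alpha i + D * ((s.1 i)%:R + 1%:R) / N%:R)
  = - (D / N%:R) by ring.
by rewrite normrN ger0_norm.
Qed.

Lemma cube_witnesses_near_members : cube_witnesses near_members alpha D.
Proof.
move=> e e_gt0; pose N := (Num.Def.archi_bound (D / e)).+1.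
have N_gt0 : (0 < N)%N by [].
have DN_lt : D / N%:R < e.
  have bound := archi_boundP (divr_ge0 (ltW D_gt0) (ltW e_gt0)).
  rewrite ltr_pdivrMr ?ltr0n // mulrC -ltr_pdivrMr //.
  by apply: lt_trans bound _; rewrite ltr_nat.
have := odd_card_rainbow N_gt0 (sperner_grid_labelling N_gt0).
have [->|[s]] := set_0Vmem [set s : cell N d | is_cell s && rainbow (grid_labelling N) s].
  by rewrite cards0.
rewrite inE => /andP[s_cell s_rainbow] _.
exists (grid_point N (fun i => s.1 i)); split; last exact: near_members_rainbow.
by apply: grid_point_cube => // i; have /is_cellP[v_lt _ _] := s_cell; exact: ltnW.
Qed.

End SpernerLabelling.

Lemma finite_family_closure_radius (R : realType) (d : nat)
    (L : set (set (vec R d))) (p : vec R d) :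
  finite_set L -> exists2 e : R, 0 < e &
    forall X, L X -> (exists2 x, X x & dmax p x < e) -> mclosure X p.
Proof.
move=> /finite_seqP[s ->].
have /choice[E E_spec] : forall X : set (vec R d), exists e : R,
    0 < e /\ (~ mclosure X p -> forall x, X x -> e <= dmax p x).
  move=> X; have [|/existsNP[e /not_implyP[e_gt0 far]]] := pselect (mclosure X p).
    by exists 1.
  exists e; split => // _ x Xx.
  by rewrite leNgt; apply/negP => near; apply: far; exists x.
have [e e_gt0 e_le] := @pos_lower_bound_seq _ _ s E (fun X _ => (E_spec X).1).
exists e => // X Xs [x Xx px]; apply: contrapT => not_cl.
by have := lt_le_trans px (le_trans (e_le X Xs) ((E_spec X).2 not_cl x Xx)); rewrite ltxx.
Qed.

Theorem mainTheorem5 (R : realType) (d : nat) (P : set (set (vec R d))) :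
  is_partition P ->
  (exists D : R, [/\ 0 < D, (forall X, P X -> strict_pairwise_bound D X) &
     exists alpha : vec R d, finite_set [set X | P X /\ X `&` cube alpha D !=set0]]) ->
  (exists p : vec R d, exists f : 'I_d.+1 -> set (vec R d),
      injective f /\ forall i, Nbar P p (f i)) /\
  has_clique P d.+1.
Proof.
move=> [_ _ P_cover] [D [D_gt0 P_bound [alpha L_fin]]].
have [p near_p] := witnesses_cluster (@near_members_mono _ _ P D alpha) D_gt0
  (cube_witnesses_near_members alpha P_cover D_gt0 P_bound).
have [e e_gt0 near_closure] := finite_family_closure_radius p L_fin.
have [q [pq [f [f_inj near_f]]]] := near_p (e / 2) (divr_gt0 e_gt0 (ltr0Sn _ 1)).
have f_closure m : Nbar P p (f m).
  have [Pfm [x [fx x_cube qx]]] := near_f m; split => //.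
  apply: near_closure; first by split => //; exists x.
  exists x => //; apply: le_lt_trans (dmax_triangle p q x) _.
  by rewrite [e]splitr ltrD.
split; first by exists p, f.
exists f; split => // [i|i j]; first by case: (f_closure i).
by exists p; split; [case: (f_closure i) | case: (f_closure j)].
Qed.
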